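(* Let $\lambda>0$ be the wavelength, let $N\ge 1$ be an integer, and let $\delta=\lambda/2$. For $n\in\{1,\dots,N\}$ let $\bar{x}_n=\left(n-\frac{N+1}{2}\right)\delta$ and $$\mathcal{A}_n=\left\{(x,y,0): |x-\bar{x}_n|\le \tfrac{\delta}{2},\ |y|\le \tfrac{\delta}{2}\right\},$$ and let $A=\delta^2$ denote the area of each $\mathcal{A}_n$. Let $z>0$ and $F>0$ with $z\neq F$, and define $$\hat{G}_{\rm ULA}=\frac{1}{(NA)^2}\left|\sum_{n=1}^N\int_{\mathcal{A}_n} e^{+\mathrm{i}\frac{2\pi}{\lambda}\left(\frac{x^2}{2F}+\frac{y^2}{2F}\right)}\,e^{-\mathrm{i}\frac{2\pi}{\lambda}\left(\frac{x^2}{2z}+\frac{y^2}{2z}\right)}\,dx\,dy\right|^2 .$$ Then, with $z_{\rm eff}=\frac{Fz}{|F-z|}$ and $a=\frac{\lambda}{8z_{\rm eff}}$, $$\hat{G}_{\rm ULA}=\frac{\left(C^2(\sqrt{a})+S^2(\sqrt{a})\right)\left(C^2(\sqrt{a}\,N)+S^2(\sqrt{a}\,N)\right)}{(Na)^2},$$ where $C$ and $S$ are the Fresnel integrals.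
   Context: The Fresnel integrals are $C(u)=\int_0^u\cos\left(\frac{\pi t^2}{2}\right)dt$ and $S(u)=\int_0^u\sin\left(\frac{\pi t^2}{2}\right)dt$. Physically, $\hat{G}_{\rm ULA}$ is the (Fresnel-approximated) normalized array gain of a uniform linear array of $N$ square antennas of side $\delta$ along the $x$-axis, centered at the origin, receiving from a transmitter at $(0,0,z)$ with matched filtering focused at $(0,0,F)$; $\mathrm{i}$ is the imaginary unit. *)

From Stdlib Require Import Reals.
From Coquelicot Require Import Coquelicot.
Open Scope R_scope.

Definition fresnelC (u : R) : R := RInt (fun t => cos (PI * t ^ 2 / 2)) 0 u.
Definition fresnelS (u : R) : R := RInt (fun t => sin (PI * t ^ 2 / 2)) 0 u.

Definition cis (theta : R) : C := (cos theta, sin theta).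

Definition delta (lam : R) : R := lam / 2.

Definition xbar (lam : R) (N n : nat) : R :=
  (INR n - (INR N + 1) / 2) * delta lam.

Definition integrand (lam z F x y : R) : C :=
  Cmult (cis (2 * PI / lam * (x ^ 2 / (2 * F) + y ^ 2 / (2 * F))))
        (cis (- (2 * PI / lam * (x ^ 2 / (2 * z) + y ^ 2 / (2 * z))))).

(* integral over the square A_n = [xbar_n - d/2, xbar_n + d/2] x [-d/2, d/2]
   (as an iterated Riemann integral; the integrand is continuous) *)
Definition antenna_integral (lam z F : R) (N n : nat) : C :=
  @RInt C_R_CompleteNormedModule (fun x => @RInt C_R_CompleteNormedModule (fun y => integrand lam z F x y)
                      (- delta lam / 2) (delta lam / 2))
       (xbar lam N n - delta lam / 2) (xbar lam N n + delta lam / 2).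

Definition area (lam : R) : R := delta lam ^ 2.

Definition G_ULA (lam z F : R) (N : nat) : R :=
  / (INR N * area lam) ^ 2 *
  (Cmod (@sum_n_m C_AbelianMonoid (fun n => antenna_integral lam z F N n) 1 N)) ^ 2.

Definition z_eff (z F : R) : R := F * z / Rabs (F - z).
Definition a_param (lam z F : R) : R := lam / (8 * z_eff z F).

(** With [c = (pi / lambda) (1/F - 1/z)] the integrand is [e^{i c x^2} e^{i c y^2}],
    so every antenna integral is the product of an [x]-integral of the chirp
    [e^{i c t^2}] over the antenna's own interval and a common [y]-integral over
    [[-delta/2, delta/2]].  The antenna intervals tile [[-N delta/2, N delta/2]],
    so the array sum collapses to one chirp integral over the whole aperture.
    The substitution [t = u / sqrt (2|c|/pi)] turns a chirp integral over a
    symmetric interval into twice a Fresnel pair [C + i S] (conjugated when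
    [c < 0]), and [sqrt a] is exactly the rescaled half-width [delta/2]. *)
From Stdlib Require Import Reals Lra Lia.
From Coquelicot Require Import Coquelicot.
Open Scope R_scope.

Lemma ex_RInt_comp_sq (g : R -> R) (k u v : R) :
  (forall x, continuous g x) -> ex_RInt (fun t => g (k * t ^ 2)) u v.
Proof.
  intros Hg. apply (@ex_RInt_continuous R_CompleteNormedModule); intros t _.
  apply (continuous_comp (fun t => k * t ^ 2) g); [|apply Hg].
  apply (@ex_derive_continuous R_AbsRing R_NormedModule). auto_derive. easy.
Qed.

Lemma RInt_sym_even (f : R -> R) (T : R) :
  (forall u v, ex_RInt f u v) -> (forall t, f (- t) = f t) ->
  RInt f (- T) T = 2 * RInt f 0 T.
Proof.
  intros Hex Hev.
  assert (Hrefl : RInt f (- T) 0 = RInt f 0 T).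
  { transitivity (RInt (fun y => scal (-1) (f (-1 * y + 0))) T 0).
    - rewrite (@RInt_comp_lin R_CompleteNormedModule) by apply Hex. f_equal; ring.
    - rewrite (RInt_ext _ (fun y => opp (f y))).
      + rewrite (@RInt_opp R_CompleteNormedModule) by apply Hex.
        apply opp_RInt_swap, Hex.
      + intros y _. rewrite <- (Hev y). replace (-1 * y + 0) with (- y) by ring.
        unfold opp, scal; simpl; unfold mult; simpl. ring. }
  rewrite <- (RInt_Chasles f (- T) 0 T), Hrefl by apply Hex.
  unfold plus; simpl. ring.
Qed.

Lemma RInt_chirp_scaling (g : R -> R) (k L : R) :
  (forall x, continuous g x) -> 0 < k ->
  sqrt (2 * k / PI) * RInt (fun t => g (k * t ^ 2)) (- L) L
  = 2 * RInt (fun t => g (PI * t ^ 2 / 2)) 0 (sqrt (2 * k / PI) * L).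
Proof.
  intros Hg Hk.
  pose proof PI_RGT_0 as HPI.
  set (s := sqrt (2 * k / PI)).
  assert (Hs : s ^ 2 = 2 * k / PI)
    by (apply pow2_sqrt, Rlt_le, Rdiv_lt_0_compat; lra).
  assert (Hex : forall u v, ex_RInt (fun t => g (PI * t ^ 2 / 2)) u v).
  { intros u v. apply (ex_RInt_ext (fun t => g (PI / 2 * t ^ 2))).
    - intros t _. f_equal. field.
    - apply ex_RInt_comp_sq, Hg. }
  rewrite <- (RInt_scal (fun t => g (k * t ^ 2))) by apply ex_RInt_comp_sq, Hg.
  rewrite (@RInt_ext R_CompleteNormedModule _ (fun y => scal s (g (PI * (s * y + 0) ^ 2 / 2)))).
  2:{ intros y _. assert (Hy : k * y ^ 2 = PI * (s * y + 0) ^ 2 / 2).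
      { replace (PI * (s * y + 0) ^ 2 / 2) with (PI * s ^ 2 * y ^ 2 / 2) by field.
        rewrite Hs. field. lra. }
      rewrite Hy. reflexivity. }
  rewrite (@RInt_comp_lin R_CompleteNormedModule (fun t => g (PI * t ^ 2 / 2))) by apply Hex.
  replace (s * - L + 0) with (- (s * L)) by ring.
  replace (s * L + 0) with (s * L) by ring.
  apply RInt_sym_even; [apply Hex|].
  intros t. f_equal. field.
Qed.

Lemma cis_plus (a b : R) : cis (a + b) = (cis a * cis b)%C.
Proof.
  unfold cis, Cmult; simpl. rewrite cos_plus, sin_plus.
  f_equal; ring.
Qed.

Lemma is_RInt_Cmult_l (k : C) (f : R -> C) (u v : R) (I : C) :
  @is_RInt C_R_NormedModule f u v I ->
  @is_RInt C_R_NormedModule (fun t => (k * f t)%C) u v (k * I)%C.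
Proof.
  intros H.
  pose proof (is_RInt_fct_extend_fst f u v I H) as Hre.
  pose proof (is_RInt_fct_extend_snd f u v I H) as Him.
  destruct k as [k1 k2]; unfold Cmult; simpl.
  apply is_RInt_fct_extend_pair; simpl.
  - apply (@is_RInt_minus R_NormedModule); apply (@is_RInt_scal R_NormedModule); assumption.
  - apply (@is_RInt_plus R_NormedModule); apply (@is_RInt_scal R_NormedModule); assumption.
Qed.

Section ChirpIntegral.

Variable c : R.

Definition chirp_integral (u v : R) : C :=
  (RInt (fun t => cos (c * t ^ 2)) u v, RInt (fun t => sin (c * t ^ 2)) u v).

Lemma is_RInt_cis_chirp (u v : R) :
  @is_RInt C_R_NormedModule (fun t => cis (c * t ^ 2)) u v (chirp_integral u v).
Proof.
  apply is_RInt_fct_extend_pair; simpl;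
    apply (@RInt_correct R_CompleteNormedModule), ex_RInt_comp_sq.
  - exact continuous_cos.
  - exact continuous_sin.
Qed.

Lemma chirp_integral_Chasles (u v w : R) :
  (chirp_integral u v + chirp_integral v w)%C = chirp_integral u w.
Proof.
  unfold chirp_integral, Cplus; simpl.
  f_equal; apply (@RInt_Chasles R_CompleteNormedModule); apply ex_RInt_comp_sq.
  all: first [exact continuous_cos | exact continuous_sin].
Qed.

Lemma sum_chirp_integral_consecutive (p : nat -> R) (m k : nat) : (m <= k)%nat ->
  @sum_n_m C_AbelianMonoid (fun n => chirp_integral (p n) (p (S n))) m k
  = chirp_integral (p m) (p (S k)).
Proof.
  induction k as [|k IH]; intros Hmk.
  - assert (m = 0%nat) as -> by lia. now rewrite sum_n_n.
  - destruct (Nat.eq_dec m (S k)) as [-> | Hne].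
    + now rewrite sum_n_n.
    + rewrite sum_n_Sm, IH by lia. apply chirp_integral_Chasles.
Qed.

End ChirpIntegral.

Lemma chirp_integral_opp (c u v : R) :
  chirp_integral (- c) u v = Cconj (chirp_integral c u v).
Proof.
  unfold chirp_integral, Cconj; simpl. f_equal.
  - apply RInt_ext. intros t _. rewrite <- cos_neg. f_equal. ring.
  - rewrite <- (@RInt_opp R_CompleteNormedModule)
      by (apply ex_RInt_comp_sq; exact continuous_sin).
    apply RInt_ext. intros t _. unfold opp; simpl. rewrite <- sin_neg. f_equal. ring.
Qed.

Definition fresnel_scale (c : R) : R := sqrt (2 * Rabs c / PI).

Lemma fresnel_scale_pos (c : R) : c <> 0 -> 0 < fresnel_scale c.
Proof.
  intros Hc. apply sqrt_lt_R0, Rdiv_lt_0_compat; [|exact PI_RGT_0].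
  pose proof (Rabs_pos_lt c Hc). lra.
Qed.

Lemma Cmod_chirp_integral_sym (c L : R) : c <> 0 ->
  Cmod (chirp_integral c (- L) L) ^ 2
  = 4 * (fresnelC (fresnel_scale c * L) ^ 2 + fresnelS (fresnel_scale c * L) ^ 2)
    / fresnel_scale c ^ 2.
Proof.
  intros Hc.
  assert (Hpos : forall k, 0 < k ->
    (fresnel_scale k * Cmod (chirp_integral k (- L) L)) ^ 2
    = 4 * (fresnelC (fresnel_scale k * L) ^ 2 + fresnelS (fresnel_scale k * L) ^ 2)).
  { intros k Hk. unfold fresnel_scale. rewrite Rabs_pos_eq by lra.
    rewrite Rpow_mult_distr, Cmod2_alt. unfold chirp_integral, Re, Im; cbn [fst snd].
    rewrite Rmult_plus_distr_l, <- !Rpow_mult_distr.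
    rewrite !RInt_chirp_scaling by first [exact continuous_cos | exact continuous_sin | exact Hk].
    unfold fresnelC, fresnelS. ring. }
  assert (Hscaled : (fresnel_scale c * Cmod (chirp_integral c (- L) L)) ^ 2
    = 4 * (fresnelC (fresnel_scale c * L) ^ 2 + fresnelS (fresnel_scale c * L) ^ 2)).
  { destruct (Rlt_or_le 0 c) as [Hc_pos | Hc_neg].
    - now apply Hpos.
    - replace c with (- - c) by ring.
      rewrite chirp_integral_opp, Cmod_conj. unfold fresnel_scale. rewrite Rabs_Ropp.
      apply Hpos. lra. }
  pose proof (fresnel_scale_pos c Hc).
  rewrite <- Hscaled. field. lra.
Qed.

Definition chirp_rate (lam z F : R) : R := PI / lam * (/ F - / z).

Section UniformLinearArray.

Variables (lam z F : R) (N : nat).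
Hypotheses (Hlam : lam <> 0) (Hz : z <> 0) (HF : F <> 0).

Let c := chirp_rate lam z F.
Let d := delta lam.

Lemma integrand_cis (x y : R) :
  integrand lam z F x y = (cis (c * x ^ 2) * cis (c * y ^ 2))%C.
Proof.
  unfold integrand. rewrite <- !cis_plus. f_equal.
  unfold c, chirp_rate. field. auto.
Qed.

Lemma antenna_integral_factor (n : nat) :
  antenna_integral lam z F N n =
  (chirp_integral c (xbar lam N n - d / 2) (xbar lam N n + d / 2)
   * chirp_integral c (- d / 2) (d / 2))%C.
Proof.
  set (Y := chirp_integral c (- d / 2) (d / 2)).
  unfold antenna_integral. fold d.
  rewrite (@RInt_ext C_R_CompleteNormedModule _ (fun x => (cis (c * x ^ 2) * Y)%C)).
  - apply (@is_RInt_unique C_R_CompleteNormedModule).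
    rewrite Cmult_comm. apply (is_RInt_ext (fun x => (Y * cis (c * x ^ 2))%C)).
    + intros x _. apply Cmult_comm.
    + apply is_RInt_Cmult_l, is_RInt_cis_chirp.
  - intros x _. apply (@is_RInt_unique C_R_CompleteNormedModule).
    apply (is_RInt_ext (fun y => (cis (c * x ^ 2) * cis (c * y ^ 2))%C)).
    + intros y _. symmetry. apply integrand_cis.
    + apply is_RInt_Cmult_l, is_RInt_cis_chirp.
Qed.

Lemma array_integral_factor : (1 <= N)%nat ->
  @sum_n_m C_AbelianMonoid (fun n => antenna_integral lam z F N n) 1 N =
  (chirp_integral c (- (INR N * d / 2)) (INR N * d / 2)
   * chirp_integral c (- (d / 2)) (d / 2))%C.
Proof.
  intros HN.
  set (p n := xbar lam N n - d / 2).
  assert (Hp : forall n, xbar lam N n + d / 2 = p (S n))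
    by (intros n; unfold p, xbar; fold d; rewrite S_INR; field).
  rewrite (sum_n_m_ext _ (fun n => @mult C_Ring (chirp_integral c (p n) (p (S n)))
                                       (chirp_integral c (- d / 2) (d / 2)))).
  2:{ intros n. rewrite antenna_integral_factor, Hp. reflexivity. }
  rewrite sum_n_m_mult_r, sum_chirp_integral_consecutive by exact HN.
  replace (- (d / 2)) with (- d / 2) by field.
  change (@mult C_Ring ?a ?b) with (Cmult a b). unfold p, xbar. fold d.
  f_equal. f_equal; rewrite !S_INR; simpl (INR 0); field.
Qed.

End UniformLinearArray.

Section ChirpRate.

Variables lam z F : R.
Hypotheses (Hlam : 0 < lam) (Hz : 0 < z) (HF : 0 < F).

Lemma Rabs_chirp_rate : Rabs (chirp_rate lam z F) = PI * Rabs (F - z) / (lam * F * z).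
Proof.
  pose proof PI_RGT_0.
  replace (chirp_rate lam z F) with (PI / (lam * F * z) * (z - F))
    by (unfold chirp_rate; field; lra).
  rewrite Rabs_mult, Rabs_minus_sym, Rabs_pos_eq.
  - field. lra.
  - apply Rlt_le, Rdiv_lt_0_compat; [lra|]. apply Rmult_lt_0_compat; [apply Rmult_lt_0_compat|]; lra.
Qed.

Hypothesis HzF : z <> F.

Lemma chirp_rate_neq0 : chirp_rate lam z F <> 0.
Proof.
  intros Hc. pose proof PI_RGT_0.
  assert (HFz : 0 < Rabs (F - z)) by (apply Rabs_pos_lt; lra).
  assert (Habs : 0 < Rabs (chirp_rate lam z F)).
  { rewrite Rabs_chirp_rate. apply Rdiv_lt_0_compat; [nra|].
    apply Rmult_lt_0_compat; [apply Rmult_lt_0_compat|]; lra. }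
  rewrite Hc, Rabs_R0 in Habs. lra.
Qed.

Lemma a_param_fresnel_scale :
  a_param lam z F = (fresnel_scale (chirp_rate lam z F) * (delta lam / 2)) ^ 2.
Proof.
  pose proof PI_RGT_0.
  assert (HFz : 0 < Rabs (F - z)) by (apply Rabs_pos_lt; lra).
  rewrite Rpow_mult_distr. unfold fresnel_scale.
  rewrite pow2_sqrt, Rabs_chirp_rate.
  - unfold a_param, z_eff, delta. field. lra.
  - apply Rlt_le, Rdiv_lt_0_compat; [|lra].
    pose proof (Rabs_pos_lt _ chirp_rate_neq0). lra.
Qed.

End ChirpRate.

Theorem theorem1 (lam : R) (N : nat) (z F : R) :
  0 < lam -> (1 <= N)%nat -> 0 < z -> 0 < F -> z <> F ->
  let a := a_param lam z F in
  G_ULA lam z F N =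
  (fresnelC (sqrt a) ^ 2 + fresnelS (sqrt a) ^ 2) *
  (fresnelC (sqrt a * INR N) ^ 2 + fresnelS (sqrt a * INR N) ^ 2) /
  (INR N * a) ^ 2.
Proof.
  intros Hlam HN Hz HF HzF a.
  set (c := chirp_rate lam z F). set (d := delta lam). set (s := fresnel_scale c).
  assert (Hc : c <> 0) by (apply chirp_rate_neq0; lra).
  assert (Hs : 0 < s) by (apply fresnel_scale_pos, Hc).
  assert (Hd : 0 < d) by (unfold d, delta; lra).
  assert (HN0 : 0 < INR N) by (apply lt_0_INR; lia).
  assert (Ha : a = (s * (d / 2)) ^ 2) by (apply a_param_fresnel_scale; lra).
  rewrite Ha, sqrt_pow2 by nra.
  replace (s * (d / 2) * INR N) with (s * (INR N * d / 2)) by field.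
  pose proof (Cmod_chirp_integral_sym c (INR N * d / 2) Hc) as HX.
  pose proof (Cmod_chirp_integral_sym c (d / 2) Hc) as HY.
  fold s in HX, HY.
  unfold G_ULA, area. rewrite array_integral_factor by first [lra | lia].
  fold c d. rewrite Cmod_mult, (Rpow_mult_distr (Cmod _)), HX, HY.
  field. lra.
Qed.
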